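(* Let $\epsilon:\mathbb{N}\to[0,\infty)$ be a non-decreasing function and let $\mathcal{A}$ be a deterministic online linear optimization algorithm on $\mathbb{R}^d$, outputting $x_t\in\mathbb{R}^d$ as a function of $g_1,\dots,g_{t-1}$, such that for every $t$ and every sequence $g_1,\dots,g_t\in\mathbb{R}^d$ with $\|g_i\|_2\le1$ we have $\sum_{i=1}^t\langle g_i,x_i\rangle\le\epsilon(t)$ (i.e. its regret against the competitor $0$ is at most $\epsilon(t)$). Then for every $T$, every sequence $g_1,\dots,g_T$ with $\|g_i\|_2\le1$ and every $t=1,\dots,T$, \[ \|x_t\|_2\le\epsilon(T)-\sum_{i=1}^{t-1}\langle g_i,x_i\rangle, \] and consequently there exists $\beta_t\in\mathbb{R}^d$ with $\|\beta_t\|_2\le1$ such that $x_t=\beta_t\left(\epsilon(T)-\sum_{i=1}^{t-1}\langle g_i,x_i\rangle\right)$. *)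

From HB Require Import structures.
From mathcomp Require Import all_boot all_order all_algebra.
Set Implicit Arguments. Unset Strict Implicit. Unset Printing Implicit Defensive.
Import Order.TTheory GRing.Theory Num.Theory.
Local Open Scope ring_scope.

Definition dotv {R : rcfType} {d : nat} (u v : 'rV[R]_d) : R := (u *m v^T) 0 0.

Definition norm2 {R : rcfType} {d : nat} (u : 'rV[R]_d) : R := Num.sqrt (dotv u u).

(* A deterministic online linear optimization algorithm is a map from the
   history [:: g_1; ...; g_{t-1}] of past gradients to the next point x_t. *)
Definition OLOalg (R : rcfType) (d : nat) := seq 'rV[R]_d -> 'rV[R]_d.

(* x_t for the gradient sequence g (indexed from 1): A applied to g_1..g_{t-1}. *)
Definition alg_out {R : rcfType} {d : nat} (A : OLOalg R d)
  (g : nat -> 'rV[R]_d) (t : nat) : 'rV[R]_d :=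
  A [seq g i | i <- iota 1 t.-1].

From HB Require Import structures.
From mathcomp Require Import all_boot all_order all_algebra.
From mathcomp Require Import zify.
Set Implicit Arguments. Unset Strict Implicit. Unset Printing Implicit Defensive.
Import Order.TTheory GRing.Theory Num.Theory.
Local Open Scope ring_scope.

(* An adversary who, after the history g_1, ..., g_{t-1}, plays the unit vector
   in the direction of x_t forces the loss <g_t, x_t> = ||x_t||. The regret
   bound at time t then reads  sum_{i<t} <g_i, x_i> + ||x_t|| <= eps(t) <= eps(T),
   and since x_t only depends on the history, this bounds x_t on every sequence
   sharing that history. *)

Section EuclideanNorm.

Variables (R : rcfType) (d : nat).
Implicit Types (u v x : 'rV[R]_d) (c : R).

Lemma dotvE u v : dotv u v = \sum_j u 0 j * v 0 j.
Proof. by rewrite /dotv !mxE; apply: eq_bigr => j _; rewrite mxE. Qed.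

Lemma dotvv_ge0 u : 0 <= dotv u u.
Proof. by rewrite dotvE; apply: sumr_ge0 => j _; rewrite -expr2 sqr_ge0. Qed.

Lemma dotvZl c u v : dotv (c *: u) v = c * dotv u v.
Proof. by rewrite !dotvE mulr_sumr; apply: eq_bigr => j _; rewrite mxE mulrA. Qed.

Lemma dotvZr c u v : dotv u (c *: v) = c * dotv u v.
Proof. by rewrite !dotvE mulr_sumr; apply: eq_bigr => j _; rewrite mxE mulrCA. Qed.

Lemma dotv0l v : dotv 0 v = 0.
Proof. by rewrite -(scale0r 0) dotvZl mul0r. Qed.

Lemma norm2_ge0 u : 0 <= norm2 u.
Proof. exact: sqrtr_ge0. Qed.

Lemma norm2_0 : norm2 (0 : 'rV[R]_d) = 0.
Proof. by rewrite /norm2 dotv0l sqrtr0. Qed.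

Lemma dotvv_norm2 u : dotv u u = norm2 u ^+ 2.
Proof. by rewrite /norm2 sqr_sqrtr // dotvv_ge0. Qed.

Lemma norm2Z c u : norm2 (c *: u) = `|c| * norm2 u.
Proof.
by rewrite /norm2 dotvZl dotvZr mulrA -expr2 sqrtrM ?sqr_ge0 // sqrtr_sqr.
Qed.

Lemma norm2_eq0 u : (norm2 u == 0) = (u == 0).
Proof.
apply/idP/idP => [|/eqP->]; last by rewrite norm2_0.
rewrite -sqrf_eq0 -dotvv_norm2 dotvE psumr_eq0; last first.
  by move=> j _; rewrite -expr2 sqr_ge0.
move=> /allP u0; apply/eqP/rowP => j; rewrite mxE.
by apply/eqP; rewrite -sqrf_eq0 expr2; exact: u0 (mem_index_enum j).
Qed.

Definition unit_dir u : 'rV[R]_d := if u == 0 then 0 else (norm2 u)^-1 *: u.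

Lemma norm2_unit_dir u : norm2 (unit_dir u) <= 1.
Proof.
rewrite /unit_dir; case: eqP => [_|/eqP u0]; first by rewrite norm2_0.
by rewrite norm2Z ger0_norm ?invr_ge0 ?norm2_ge0 // mulVf // norm2_eq0.
Qed.

Lemma dotv_unit_dir u : dotv (unit_dir u) u = norm2 u.
Proof.
rewrite /unit_dir; case: eqP => [->|/eqP u0]; first by rewrite dotv0l norm2_0.
by rewrite dotvZl dotvv_norm2 expr2 mulKf // norm2_eq0.
Qed.

Lemma norm2_le_scale_ball c x :
  norm2 x <= c -> exists2 beta, norm2 beta <= 1 & x = c *: beta.
Proof.
move=> xc; have c_ge0 : 0 <= c := le_trans (norm2_ge0 x) xc.
have [c0|c_neq0] := eqVneq c 0.
  exists 0; first by rewrite norm2_0.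
  apply/eqP; rewrite scaler0 -norm2_eq0 eq_le norm2_ge0 andbT.
  by rewrite -c0.
exists (c^-1 *: x); last by rewrite scalerA mulfV // scale1r.
rewrite norm2Z ger0_norm ?invr_ge0 // mulrC ler_pdivrMr ?mul1r //.
by rewrite lt_def c_neq0.
Qed.

End EuclideanNorm.

Lemma eq_alg_out (R : rcfType) d (A : OLOalg R d) (g g' : nat -> 'rV[R]_d) t :
  (forall i, (0 < i < t)%N -> g' i = g i) -> alg_out A g' t = alg_out A g t.
Proof.
move=> gg'; rewrite /alg_out; congr A; apply/eq_in_map => i.
by rewrite mem_iota => /andP[i1 it]; apply: gg'; lia.
Qed.

Section RegretBoundsIterates.

Variables (R : rcfType) (d : nat) (eps : nat -> R) (A : OLOalg R d).
Hypothesis regret : forall (t : nat) (g : nat -> 'rV[R]_d),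
  (forall i : nat, (1 <= i <= t)%N -> norm2 (g i) <= 1) ->
  \sum_(1 <= i < t.+1) dotv (g i) (alg_out A g i) <= eps t.

Lemma norm2_alg_out_le (g : nat -> 'rV[R]_d) t :
  (0 < t)%N -> (forall i, (1 <= i < t)%N -> norm2 (g i) <= 1) ->
  norm2 (alg_out A g t) <= eps t - \sum_(1 <= i < t) dotv (g i) (alg_out A g i).
Proof.
move=> t_gt0 g_le1; set x := alg_out A g t.
pose g' i := if (i < t)%N then g i else if i == t then unit_dir x else 0.
have g'E i : (i < t)%N -> g' i = g i by rewrite /g' => ->.
have out'E i : (i <= t)%N -> alg_out A g' i = alg_out A g i.
  by move=> it; apply: eq_alg_out => j /andP[_ jt]; apply: g'E; lia.
have g't : g' t = unit_dir x by rewrite /g' ltnn eqxx.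
have sum'E : \sum_(1 <= i < t.+1) dotv (g' i) (alg_out A g' i)
    = \sum_(1 <= i < t) dotv (g i) (alg_out A g i) + norm2 x.
  rewrite big_nat_recr //= out'E // g't dotv_unit_dir; congr (_ + _).
  by apply: eq_big_nat => i /andP[_ it]; rewrite g'E // out'E // ltnW.
rewrite lerBrDl -sum'E; apply: regret => i /andP[i1 it].
have [ti|ti] := ltnP i t; first by rewrite g'E // g_le1 // i1.
have -> : i = t by lia.
by rewrite g't norm2_unit_dir.
Qed.

End RegretBoundsIterates.

Theorem mainTheorem10 (R : rcfType) (d : nat) (eps : nat -> R) (A : OLOalg R d)
  (eps_nneg : forall n : nat, 0 <= eps n)
  (eps_mono : forall m n : nat, (m <= n)%N -> eps m <= eps n)
  (regret : forall (t : nat) (g : nat -> 'rV[R]_d),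
     (forall i : nat, (1 <= i <= t)%N -> norm2 (g i) <= 1) ->
     \sum_(1 <= i < t.+1) dotv (g i) (alg_out A g i) <= eps t) :
  forall (T : nat) (g : nat -> 'rV[R]_d),
    (forall i : nat, (1 <= i <= T)%N -> norm2 (g i) <= 1) ->
    forall t : nat, (1 <= t <= T)%N ->
      norm2 (alg_out A g t)
        <= eps T - \sum_(1 <= i < t) dotv (g i) (alg_out A g i)
      /\ exists beta : 'rV[R]_d,
           norm2 beta <= 1 /\
           alg_out A g t
             = (eps T - \sum_(1 <= i < t) dotv (g i) (alg_out A g i)) *: beta.
Proof.
move=> T g g_le1 t /andP[t_gt0 tT].
have bound : norm2 (alg_out A g t)
    <= eps T - \sum_(1 <= i < t) dotv (g i) (alg_out A g i).
  apply: le_trans (lerB (eps_mono _ _ tT) (lexx _)).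
  by apply: norm2_alg_out_le => // i /andP[i1 it]; apply: g_le1; lia.
split=> //; have [beta beta_le1 ->] := norm2_le_scale_ball bound.
by exists beta.
Qed.
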